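(* Fix integers $m\in\mathbb{N}$ and $j$ with $m\le j\le 2m$. Let $\mathcal{A}_j$ be the set of all tuples $(\alpha_1,\dots,\alpha_j)\in\{1,\dots,2m\}^j$ with $\alpha_1+\cdots+\alpha_j=2m$ such that exactly $2m-j$ of the $\alpha_\nu$ equal $2$ and the remaining $2(j-m)$ of the $\alpha_\nu$ equal $1$; let $\mathcal{A}_j^c$ be the set of tuples $(\alpha_1,\dots,\alpha_j)\in\{1,\dots,2m\}^j$ with $\alpha_1+\cdots+\alpha_j=2m$ that are not in $\mathcal{A}_j$. For such a tuple define $$S_n(\alpha_1,\dots,\alpha_j)=\frac{1}{n^m}\sum_{\substack{(i_1,\dots,i_j)\in\{1,\dots,n\}^j\\ i_1,\dots,i_j\text{ pairwise distinct}}}\cos\Big(\frac{2\pi i_1}{n}\Big)^{\alpha_1}\cdots\cos\Big(\frac{2\pi i_j}{n}\Big)^{\alpha_j}.$$ Then, as $n\to\infty$, for $(\alpha_1,\dots,\alpha_j)\in\mathcal{A}_j$, $$S_n(\alpha_1,\dots,\alpha_j)=(-1)^{j-m}\frac{(2(j-m))!}{2^j\,(j-m)!}\Big(1+\mathcal{O}\Big(\frac1n\Big)\Big),$$ and for $(\alpha_1,\dots,\alpha_j)\in\mathcal{A}_j^c$, $$S_n(\alpha_1,\dots,\alpha_j)=\mathcal{O}\Big(\frac1n\Big).$$ *)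

From HB Require Import structures.
From Stdlib Require Import Reals.
From mathcomp Require Import all_boot all_order all_algebra.
From mathcomp Require Import Rstruct.
Unset Printing Implicit Defensive.
Import Order.TTheory GRing.Theory Num.Theory.
Local Open Scope ring_scope.

(* Indices 1..n are encoded by i : 'I_n via i.+1; indices nu = 1..j via 'I_j. *)

Definition admissible (m j : nat) (alpha : 'I_j -> nat) : Prop :=
  (forall k, (1 <= alpha k <= 2 * m)%N) /\ (\sum_(k < j) alpha k)%N = (2 * m)%N.

Definition inA (m j : nat) (alpha : 'I_j -> nat) : bool :=
  [forall k, (alpha k == 1%N) || (alpha k == 2%N)] &&
  (#|[pred k | alpha k == 2%N]| == (2 * m - j)%N).

Definition S (m j : nat) (alpha : 'I_j -> nat) (n : nat) : R :=
  (n%:R ^+ m)^-1 *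
  \sum_(i : {ffun 'I_j -> 'I_n} | injectiveb i)
     \prod_(k < j) (cos (2 * PI * ((i k).+1)%:R / n%:R)) ^+ alpha k.

Definition Aconst (m j : nat) : R :=
  (-1) ^+ (j - m) * ((2 * (j - m))`!)%:R / ((2 ^ j * (j - m)`!)%N)%:R.

From Stdlib Require Import Reals.
From mathcomp Require Import all_boot all_order all_algebra.
From mathcomp Require Import Rstruct.
From mathcomp Require Import ring lra zify.
Import Order.TTheory GRing.Theory Num.Theory.
Local Open Scope ring_scope.

(* Write [c_x = cos (2 pi x / n)]; all that is used about these numbers is [|c_x| <= 1],
   [sum_x c_x = 0] and [sum_x c_x ^ 2 = n / 2].  Letting the first index of a sum over
   pairwise distinct indices run freely and subtracting its coincidences with each other
   index writes the distinct sum with exponents [a, b_1, ..., b_k] as [sum_x c_x ^ a] times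
   the one with exponents [b], minus the [k] distinct sums in which [a] is added to some
   [b_i].  By induction on the number of indices, the distinct sum with exponents [al] is
   [L al * n ^ (|al| / 2) + O (n ^ (ceil (|al| / 2) - 1))]: an exponent [1] kills the free
   sum and must be merged with another exponent [1], which produces the signed count of
   pairings of the exponents [1]; an exponent [2] contributes a factor [n / 2]; an exponent
   [a >= 3] contributes at most [n], which is of lower order.  For [|al| = 2m] the constant
   [L al] is the constant of the theorem on [A_j] and vanishes on its complement. *)

(* Stdlib reads the arguments of [sin] and [cos] in [R_scope]; reading them in
   [ring_scope] lets the MathComp lemmas rewrite inside them. *)
Local Arguments sin _%_ring_scope.
Local Arguments cos _%_ring_scope.

Lemma PI_gt0 : 0 < PI.
Proof. exact/RltP/PI_RGT_0. Qed.

Lemma sin_addn2PI (x : R) (k : nat) : sin (x + 2 * k%:R * PI) = sin x.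
Proof. by have := sin_period x k; rewrite INRE. Qed.

Lemma sin2_add_cos2 (x : R) : sin x ^+ 2 + cos x ^+ 2 = 1.
Proof. by have := sin2_cos2 x; rewrite /Rsqr !RmultE -!expr2. Qed.

(* [2 sin (phi/2) cos ((x+1) phi) = u (x+1) - u x] with [u x = sin (x phi + phi/2)]. *)
Lemma sum_cos_mul (phi : R) (n : nat) :
  2 * sin (phi / 2) * \sum_(x < n) cos (x.+1%:R * phi)
  = sin (n%:R * phi + phi / 2) - sin (phi / 2).
Proof.
set u := fun x : nat => sin (x%:R * phi + phi / 2).
have step (x : nat) : 2 * sin (phi / 2) * cos (x.+1%:R * phi) = u x.+1 - u x.
  rewrite /u (_ : x%:R * phi + phi / 2 = x.+1%:R * phi + - (phi / 2)); last first.
    by rewrite mulrSr; field.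
  by rewrite !sinD sin_neg cos_neg RoppE; ring.
rewrite mulr_sumr (eq_bigr _ (fun (x : 'I_n) _ => step x)).
by rewrite -(big_mkord xpredT (fun x => u x.+1 - u x)) telescope_sumr // /u mul0r add0r.
Qed.

Lemma sum_cos_root_mul (n r : nat) : (0 < r < n)%N ->
  \sum_(x < n) cos (x.+1%:R * (2 * PI * r%:R / n%:R)) = 0.
Proof.
case/andP=> r_gt0 r_lt_n; have n_neq0 : (n%:R : R) != 0.
  by rewrite pnatr_eq0 -lt0n (leq_trans r_gt0 (ltnW r_lt_n)).
set phi := 2 * PI * r%:R / n%:R.
have half_phiE : phi / 2 = PI * (r%:R / n%:R) by rewrite /phi; field.
have sin_half_gt0 : 0 < sin (phi / 2).
  have n_gt0 : 0 < (n%:R : R) by rewrite lt0r n_neq0 ler0n.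
  have /RltP lo : 0 < PI * (r%:R / n%:R).
    by rewrite mulr_gt0 ?PI_gt0 // divr_gt0 // ltr0n.
  have /RltP hi : PI * (r%:R / n%:R) < PI.
    by rewrite gtr_pMr ?PI_gt0 // ltr_pdivrMr // mul1r ltr_nat.
  by rewrite half_phiE; apply/RltP/sin_gt_0.
have := sum_cos_mul phi n.
rewrite (_ : n%:R * phi + phi / 2 = phi / 2 + 2 * r%:R * PI); last by rewrite /phi; field.
rewrite sin_addn2PI subrr => /eqP; rewrite !mulf_eq0 (gt_eqF sin_half_gt0) orbF.
by rewrite pnatr_eq0 => /eqP.
Qed.

Definition cos_root (n : nat) (x : 'I_n) : R := cos (2 * PI * x.+1%:R / n%:R).

Lemma cos_rootE n (x : 'I_n) : cos_root n x = cos (x.+1%:R * (2 * PI * 1%:R / n%:R)).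
Proof. by rewrite /cos_root; congr cos; ring. Qed.

Lemma norm_cos_root_le1 n (x : 'I_n) : `|cos_root n x| <= 1.
Proof.
have [lo hi] := COS_bound (2 * PI * x.+1%:R / n%:R).
by rewrite ler_norml; apply/andP; split; apply/RleP; rewrite ?R1E ?RoppE.
Qed.

Lemma sum_cos_root n : (1 < n)%N -> \sum_(x < n) cos_root n x = 0.
Proof.
by move=> n_gt1; under eq_bigr do rewrite cos_rootE; apply: sum_cos_root_mul; rewrite n_gt1.
Qed.

Lemma sum_cos_root_sqr n : (2 < n)%N -> \sum_(x < n) cos_root n x ^+ 2 = 2^-1 * n%:R.
Proof.
move=> n_gt2.
have sqrE (x : 'I_n) : cos_root n x ^+ 2 = 2^-1 * (1 + cos (x.+1%:R * (2 * PI * 2%:R / n%:R))).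
  set y := x.+1%:R * (2 * PI * 1%:R / n%:R).
  have -> : x.+1%:R * (2 * PI * 2%:R / n%:R) = y + y by rewrite /y; ring.
  by rewrite cos_rootE -/y cosD; have := sin2_add_cos2 y; lra.
under eq_bigr do rewrite sqrE.
by rewrite -mulr_sumr big_split /= sum_cos_root_mul ?n_gt2 // addr0 sumr_const card_ord.
Qed.

Definition ord_tail {T : Type} {j : nat} (f : 'I_j.+1 -> T) : 'I_j -> T :=
  fun k => f (lift ord0 k).

Section DistinctSum.
Context {A : comPzRingType}.

Definition distinct_sum {n j : nat} (f : 'I_j -> 'I_n -> A) : A :=
  \sum_(i : {ffun 'I_j -> 'I_n} | injectiveb i) \prod_(k < j) f k (i k).

Definition ffun_cons {n j : nat} (x : 'I_n) (g : {ffun 'I_j -> 'I_n}) :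
  {ffun 'I_j.+1 -> 'I_n} :=
  [ffun k => oapp g x (unlift ord0 k)].

Lemma distinct_sum0 n (f : 'I_0 -> 'I_n -> A) : distinct_sum f = 1.
Proof.
rewrite /distinct_sum (eq_bigl xpredT) => [|i]; last by apply/injectiveP => -[].
under eq_bigr do rewrite big_ord0.
by rewrite sumr_const card_ffun !card_ord.
Qed.

Lemma ffun_cons0 n j (x : 'I_n) (g : {ffun 'I_j -> 'I_n}) : ffun_cons x g ord0 = x.
Proof. by rewrite ffunE unlift_none. Qed.

Lemma ffun_consS n j (x : 'I_n) (g : {ffun 'I_j -> 'I_n}) k : ffun_cons x g (lift ord0 k) = g k.
Proof. by rewrite ffunE liftK. Qed.

Lemma ffun_cons_bij n j :
  bijective (fun p : {ffun 'I_j -> 'I_n} * 'I_n => ffun_cons p.2 p.1).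
Proof.
exists (fun i : {ffun 'I_j.+1 -> 'I_n} => ([ffun k => i (lift ord0 k)], i ord0)).
  by case=> g x /=; rewrite ffun_cons0; congr pair; apply/ffunP => k; rewrite ffunE ffun_consS.
move=> i; apply/ffunP => k /=.
by case: (unliftP ord0 k) => [k'|] ->; rewrite ?ffun_cons0 ?ffun_consS ?ffunE.
Qed.

Lemma injectiveb_ffun_cons n j (x : 'I_n) (g : {ffun 'I_j -> 'I_n}) :
  injectiveb (ffun_cons x g) = injectiveb g && [forall k, g k != x].
Proof.
apply/injectiveP/andP => [inj_cons | [/injectiveP inj_g /forallP g_neq_x]].
  split.
    apply/injectiveP => k1 k2 eq_g; apply: (@lift_inj _ ord0); apply: inj_cons.
    by rewrite !ffun_consS.
  apply/forallP => k; apply: contra_neq (neq_lift ord0 k) => gk_x.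
  by apply: inj_cons; rewrite ffun_cons0 ffun_consS.
move=> k1 k2; case: (unliftP ord0 k1) => [k1'|] ->; case: (unliftP ord0 k2) => [k2'|] ->;
  rewrite ?ffun_cons0 ?ffun_consS //.
- by move/inj_g ->.
- by move=> eq_gx; have := g_neq_x k1'; rewrite eq_gx eqxx.
- by move=> eq_xg; have := g_neq_x k2'; rewrite eq_xg eqxx.
Qed.

Lemma sum_out_of_image n j (g : {ffun 'I_j -> 'I_n}) (F : 'I_n -> A) : injectiveb g ->
  \sum_(x | [forall k, g k != x]) F x = \sum_x F x - \sum_(k < j) F (g k).
Proof.
move/injectiveP=> inj_g.
rewrite [\sum_x F x](bigID [pred x | x \in g @: setT]) /= big_imset /=; last first.
  by move=> ? ? _ _ /inj_g.
rewrite (_ : \sum_(k in setT) F (g k) = \sum_(k < j) F (g k)); last first.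
  by apply: eq_bigl => k; rewrite in_setT.
rewrite addrC addrK; apply: eq_bigl => x.
apply/forallP/negP => [g_neq_x /imsetP[k _ xE] | x_notin k].
  by have := g_neq_x k; rewrite xE eqxx.
by apply/eqP => gk_x; apply: x_notin; apply/imsetP; exists k; rewrite ?in_setT.
Qed.

(* The first index runs over all of ['I_n], minus its coincidences with each of the others. *)
Lemma distinct_sumS n j (f : 'I_j.+1 -> 'I_n -> A) :
  distinct_sum f = distinct_sum (ord_tail f) * \sum_x f ord0 x
    - \sum_(k < j) distinct_sum (fun k' x => ord_tail f k' x * (if k' == k then f ord0 x else 1)).
Proof.
rewrite /distinct_sum (reindex _ (onW_bij _ (@ffun_cons_bij n j))) /=.
transitivity (\sum_(g : {ffun 'I_j -> 'I_n} | injectiveb g)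
                \sum_(x | [forall k, g k != x]) \prod_(k < j.+1) f k (ffun_cons x g k)).
  by rewrite pair_big_dep; apply: eq_bigl => -[g x]; rewrite /= injectiveb_ffun_cons.
rewrite mulr_suml exchange_big -sumrB /=; apply: eq_bigr => g inj_g.
rewrite (eq_bigr (fun x => f ord0 x * \prod_k ord_tail f k (g k))) => [|x _]; last first.
  by rewrite big_ord_recl ffun_cons0; congr (_ * _); apply: eq_bigr => k _; rewrite ffun_consS.
rewrite -mulr_suml sum_out_of_image // mulrBl mulrC; congr (_ - _).
rewrite mulr_suml; apply: eq_bigr => k _; rewrite big_split /= mulrC; congr (_ * _).
by rewrite (bigD1 k) //= eqxx big1 ?mulr1 // => k' /negbTE ->.
Qed.

End DistinctSum.

(* [bigO_below e u] says [u n = O(n ^ e / n)]; it is stated without division so that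
   it also makes sense at [n = 0]. *)
Definition bigO_below (e : nat) (u : nat -> R) : Prop :=
  exists K N, forall n, (N <= n)%N -> n%:R * `|u n| <= K * n%:R ^+ e.

Lemma bigO_below_eq (N : nat) {e : nat} {u w : nat -> R} :
  bigO_below e u -> (forall n, (N <= n)%N -> u n = w n) -> bigO_below e w.
Proof.
move=> [K [M bound_u]] eq_uw; exists K, (maxn N M) => n; rewrite geq_max => /andP[Nn Mn].
by rewrite -eq_uw ?bound_u.
Qed.

Lemma bigO_below0 e : bigO_below e (fun=> 0).
Proof. by exists 0, 0%N => n _; rewrite normr0 !mulr0 mul0r. Qed.

Lemma bigO_belowD {e : nat} {u w : nat -> R} :
  bigO_below e u -> bigO_below e w -> bigO_below e (fun n => u n + w n).
Proof.
move=> [K1 [N1 bound_u]] [K2 [N2 bound_w]]; exists (K1 + K2), (maxn N1 N2) => n.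
rewrite geq_max => /andP[N1n N2n]; rewrite mulrDl.
apply: le_trans (lerD (bound_u n N1n) (bound_w n N2n)).
by rewrite -mulrDr ler_wpM2l ?ler0n ?ler_normD.
Qed.

Lemma bigO_belowN {e : nat} {u : nat -> R} : bigO_below e u -> bigO_below e (fun n => - u n).
Proof. by move=> [K [N bound_u]]; exists K, N => n; rewrite normrN; apply: bound_u. Qed.

Lemma bigO_below_sum {I : Type} {e : nat} {u : I -> nat -> R} (r : seq I) :
  (forall i, bigO_below e (u i)) -> bigO_below e (fun n => \sum_(i <- r) u i n).
Proof.
move=> bound_u; elim: r => [|i r IHr].
  by apply: (bigO_below_eq 0%N (bigO_below0 e)) => n _; rewrite big_nil.
by apply: (bigO_below_eq 0%N (bigO_belowD (bound_u i) IHr)) => n _; rewrite big_cons.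
Qed.

Lemma bigO_below_mulS {e : nat} {u : nat -> R} (a : R) :
  bigO_below e u -> bigO_below e.+1 (fun n => a * n%:R * u n).
Proof.
move=> [K [N bound_u]]; exists (`|a| * K), N => n Nn.
rewrite !normrM normr_nat.
have -> : n%:R * (`|a| * n%:R * `|u n|) = `|a| * n%:R * (n%:R * `|u n|) by ring.
have -> : `|a| * K * n%:R ^+ e.+1 = `|a| * n%:R * (K * n%:R ^+ e) by rewrite exprS; ring.
by rewrite ler_wpM2l ?mulr_ge0 ?ler0n ?bound_u.
Qed.

Lemma bigO_below_leq {e : nat} {u : nat -> R} (e' : nat) :
  (e <= e')%N -> bigO_below e u -> bigO_below e' u.
Proof.
move=> le_ee' [K [N bound_u]]; exists `|K|, (maxn N 1) => n; rewrite geq_max => /andP[Nn n_gt0].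
apply: le_trans (bound_u n Nn) _; apply: le_trans (ler_norm _) _.
by rewrite normrM normrX normr_nat ler_wpM2l // ler_weXn2l // ler1n.
Qed.

Lemma bigO_below_bounded {s : nat} {x : nat -> R} {l : R} :
  bigO_below (uphalf s) (fun n => x n - l * n%:R ^+ s./2) ->
  exists C N, forall n, (N <= n)%N -> `|x n| <= C * n%:R ^+ s./2.
Proof.
move=> [K [N bound]]; exists (`|l| + `|K|), (maxn N 1) => n.
rewrite geq_max => /andP[Nn n_gt0]; have n_pos : 0 < (n%:R : R) by rewrite ltr0n.
have err : `|x n - l * n%:R ^+ s./2| <= `|K| * n%:R ^+ s./2.
  rewrite -(ler_pM2l n_pos) mulrCA -exprS; apply: le_trans (bound n Nn) _.
  apply: le_trans (ler_norm _) _; rewrite normrM normrX normr_nat ler_wpM2l //.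
  by rewrite ler_weXn2l ?ler1n // uphalf_half; case: odd.
rewrite -[x n](subrK (l * n%:R ^+ s./2)) mulrDl addrC.
apply: le_trans (ler_normD _ _) _; rewrite normrM normrX normr_nat.
by rewrite lerD.
Qed.

Lemma bigO_below_mul {h : nat} {x p : nat -> R} :
  (exists C N, forall n, (N <= n)%N -> `|x n| <= C * n%:R ^+ h) ->
  (forall n, `|p n| <= n%:R) -> bigO_below h.+2 (fun n => x n * p n).
Proof.
move=> [C [N bound_x]] bound_p; exists C, N => n Nn.
rewrite normrM (_ : C * _ = n%:R * ((C * n%:R ^+ h) * n%:R)); last by rewrite !exprS; ring.
by rewrite ler_wpM2l ?ler_pM ?bound_x.
Qed.

Definition count_entries (P : pred nat) {j : nat} (al : 'I_j -> nat) : nat :=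
  \sum_(k < j) P (al k).

Definition entry_sum {j : nat} (al : 'I_j -> nat) : nat := \sum_(k < j) al k.

Definition incr_at {j : nat} (al : 'I_j -> nat) (k : 'I_j) (a : nat) : 'I_j -> nat :=
  fun k' => (al k' + (k' == k) * a)%N.

Lemma count_entries_recl (P : pred nat) j (al : 'I_j.+1 -> nat) :
  count_entries P al = (P (al ord0) + count_entries P (ord_tail al))%N.
Proof. exact: big_ord_recl. Qed.

Lemma entry_sum_recl j (al : 'I_j.+1 -> nat) :
  entry_sum al = (al ord0 + entry_sum (ord_tail al))%N.
Proof. exact: big_ord_recl. Qed.

Lemma count_entries_gt0 (P : pred nat) j (al : 'I_j -> nat) k :
  P (al k) -> (0 < count_entries P al)%N.
Proof. by move=> Pk; rewrite /count_entries (bigD1 k) //= Pk. Qed.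

Lemma count_entries_incr_at (P : pred nat) j (al : 'I_j -> nat) k a :
  (count_entries P (incr_at al k a) + P (al k) = count_entries P al + P (al k + a))%N.
Proof.
rewrite /count_entries (bigD1 k) //= [in RHS](bigD1 k) //= /incr_at eqxx mul1n.
by under eq_bigr => k' /negbTE -> do rewrite mul0n addn0; lia.
Qed.

Lemma entry_sum_incr_at j (al : 'I_j -> nat) k a :
  entry_sum (incr_at al k a) = (entry_sum al + a)%N.
Proof.
rewrite /entry_sum /incr_at big_split /=; congr addn.
by rewrite (bigD1 k) //= eqxx mul1n big1 ?addn0 // => k' /negbTE ->.
Qed.

(* [(-1)^(t/2) (t-1)!!] for even [t] and [0] for odd [t]: the first of [t] exponents [1]
   merges with one of the [t - 1] others into an exponent [2], at the cost of a sign. *)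
Fixpoint signed_pairings (t : nat) : R :=
  (match t with
   | 0 => 1
   | 1 => 0
   | (u.+1 as t').+1 => - t'%:R * signed_pairings u
   end)%R.

Lemma signed_pairings_double u :
  signed_pairings u.*2 = (-1) ^+ u * (u.*2)`!%:R / (2 ^+ u * u`!%:R).
Proof.
elim: u => [|u IHu]; first by rewrite /= !expr0 !mul1r invr1.
have fact_neq0 k : (k`!%:R : R) != 0 by rewrite pnatr_eq0 -lt0n fact_gt0.
rewrite doubleS /= IHu !factS !natrM !exprS -!addnn -mulr_natl.
by field; rewrite fact_neq0 nat1r pnatr_eq0 expf_neq0 // pnatr_eq0.
Qed.

Section LeadingConstant.
Variable v : R.

(* The coefficient of [n ^ (|al| / 2)] in the distinct sum with exponents [al], where
   [v] is the mean of the [c_x ^ 2]. *)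
Definition leading_const {j : nat} (al : 'I_j -> nat) :=
  if count_entries (fun x => 2 < x)%N al == 0%N
  then signed_pairings (count_entries (pred1 1%N) al) * v ^+ (entry_sum al)./2
  else 0.

Lemma leading_const_large j (al : 'I_j -> nat) k : (2 < al k)%N -> leading_const al = 0.
Proof.
move=> al_k_gt2; rewrite /leading_const eqn0Ngt.
by rewrite (@count_entries_gt0 (fun x => 2 < x)%N _ _ _ al_k_gt2).
Qed.

Lemma leading_const_head2 j (al : 'I_j.+1 -> nat) :
  al ord0 = 2%N -> leading_const al = v * leading_const (ord_tail al).
Proof.
move=> head2; rewrite /leading_const !count_entries_recl entry_sum_recl head2 /=.
by case: ifP => _; rewrite ?mulr0 // exprS; ring.
Qed.

Lemma leading_const_head1 j (al : 'I_j.+1 -> nat) : al ord0 = 1%N -> (forall k, 0 < al k)%N ->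
  leading_const al + \sum_(k < j) leading_const (incr_at (ord_tail al) k 1) = 0.
Proof.
move=> head1 al_gt0; set be := ord_tail al.
set X := if count_entries (fun x => 2 < x)%N be == 0%N
         then signed_pairings (count_entries (pred1 1%N) be).-1 * v ^+ (entry_sum be).+1./2
         else 0.
have incr_atE k : leading_const (incr_at be k 1) = (be k == 1%N)%:R * X.
  have [be_k1 | be_k_neq1] := eqVneq (be k) 1%N; last first.
    rewrite mul0r (@leading_const_large _ _ k) // /incr_at eqxx mul1n.
    by have := al_gt0 (lift ord0 k); move: be_k_neq1; rewrite /be /ord_tail; lia.
  have large_incr := count_entries_incr_at (fun x => 2 < x)%N _ be k 1.
  have ones_incr := count_entries_incr_at (pred1 1%N) _ be k 1.
  rewrite be_k1 /= !addn0 in large_incr ones_incr.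
  by rewrite mul1r /leading_const /X large_incr -ones_incr addn1 entry_sum_incr_at addn1.
rewrite (eq_bigr _ (fun k _ => incr_atE k)) -mulr_suml -natr_sum.
rewrite -/(count_entries (pred1 1%N) be) /leading_const /X.
rewrite !count_entries_recl entry_sum_recl head1 -/be add0n add1n.
case: ifP => _; rewrite ?mul0r ?mulr0 ?addr0 //.
rewrite mulrA -mulrDl; case: (count_entries _ be) => [|t] /=.
  by rewrite mul0r addr0 mul0r.
by rewrite add0n mulNr addNr mul0r.
Qed.

End LeadingConstant.

Section DistinctMoments.
Variable c : forall n, 'I_n -> R.
Variables (v : R) (n0 : nat).
Hypothesis norm_c_le1 : forall n x, `|c n x| <= 1.
Hypothesis sum_c : forall n, (n0 <= n)%N -> \sum_x c n x = 0.
Hypothesis sum_c_sqr : forall n, (n0 <= n)%N -> \sum_x c n x ^+ 2 = v * n%:R.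

Definition distinct_moment n {j : nat} (al : 'I_j -> nat) :=
  distinct_sum (fun k x => c n x ^+ al k).

Definition moment_error {j : nat} (al : 'I_j -> nat) n :=
  distinct_moment n al - leading_const v al * n%:R ^+ (entry_sum al)./2.

Definition head_error {j : nat} (al : 'I_j.+1 -> nat) n :=
  distinct_moment n (ord_tail al) * \sum_x c n x ^+ al ord0
  - (leading_const v al + \sum_(k < j) leading_const v (incr_at (ord_tail al) k (al ord0)))
    * n%:R ^+ (entry_sum al)./2.

Lemma norm_sum_exprc n a : `|\sum_x c n x ^+ a| <= n%:R.
Proof.
apply: le_trans (ler_norm_sum _ _ _) _; rewrite -[n in n%:R]card_ord -sumr_const.
by apply: ler_sum => x _; rewrite normrX exprn_ile1.
Qed.

Lemma moment_error0 (al : 'I_0 -> nat) n : moment_error al n = 0.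
Proof.
rewrite /moment_error /distinct_moment distinct_sum0 /leading_const /entry_sum /count_entries.
by rewrite !big_ord0 /= !expr0 !mulr1 subrr.
Qed.

Lemma distinct_momentS n j (al : 'I_j.+1 -> nat) :
  distinct_moment n al = distinct_moment n (ord_tail al) * \sum_x c n x ^+ al ord0
    - \sum_(k < j) distinct_moment n (incr_at (ord_tail al) k (al ord0)).
Proof.
rewrite /distinct_moment distinct_sumS; congr (_ - _); apply: eq_bigr => k _.
apply: eq_bigr => i _; apply: eq_bigr => k' _; rewrite /ord_tail /incr_at.
by case: eqP => _; rewrite ?mul1n ?mul0n ?addn0 ?mulr1 ?exprD.
Qed.

Lemma moment_errorS j (al : 'I_j.+1 -> nat) n :
  moment_error al n
  = head_error al n - \sum_(k < j) moment_error (incr_at (ord_tail al) k (al ord0)) n.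
Proof.
rewrite /moment_error /head_error distinct_momentS sumrB.
under [X in _ = _ - (_ - X)]eq_bigr do rewrite entry_sum_incr_at addnC -entry_sum_recl.
by rewrite -mulr_suml; ring.
Qed.

Lemma head_error_head1 j (al : 'I_j.+1 -> nat) n : al ord0 = 1%N -> (forall k, 0 < al k)%N ->
  (n0 <= n)%N -> head_error al n = 0.
Proof.
move=> head1 al_gt0 n0n; rewrite /head_error head1 sum_c //.
by rewrite leading_const_head1 // mulr0 mul0r subrr.
Qed.

Lemma head_error_head2 j (al : 'I_j.+1 -> nat) n : al ord0 = 2%N -> (forall k, 0 < al k)%N ->
  (n0 <= n)%N -> head_error al n = v * n%:R * moment_error (ord_tail al) n.
Proof.
move=> head2 al_gt0 n0n.
rewrite /head_error /moment_error (@leading_const_head2 _ _ _ head2).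
rewrite [\sum_(k < j) _]big1 => [|k _]; last first.
  apply: (@leading_const_large _ _ _ k); rewrite /incr_at eqxx mul1n head2 addn2.
  exact: al_gt0.
by rewrite entry_sum_recl head2 sum_c_sqr // add2n exprS addr0; ring.
Qed.

Lemma head_error_large j (al : 'I_j.+1 -> nat) n : (2 < al ord0)%N ->
  head_error al n = distinct_moment n (ord_tail al) * \sum_x c n x ^+ al ord0.
Proof.
move=> head_gt2; rewrite /head_error (@leading_const_large _ _ _ _ head_gt2).
rewrite [\sum_(k < j) _]big1 ?add0r ?mul0r ?subr0 // => k _.
by apply: (@leading_const_large _ _ _ k); rewrite /incr_at eqxx mul1n ltn_addl.
Qed.

Lemma bigO_below_head_error j (al : 'I_j.+1 -> nat) : (forall k, 0 < al k)%N ->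
  bigO_below (uphalf (entry_sum (ord_tail al))) (moment_error (ord_tail al)) ->
  bigO_below (uphalf (entry_sum al)) (head_error al).
Proof.
move=> al_gt0 tail_error; rewrite entry_sum_recl.
case: (ltngtP (al ord0) 2) => [head_lt2 | head_gt2 | head2].
- have head1 : al ord0 = 1%N by have := al_gt0 ord0; lia.
  by apply: (bigO_below_eq n0 (bigO_below0 _)) => n n0n; rewrite head_error_head1.
- have tail_bound := bigO_below_bounded tail_error.
  have order : ((entry_sum (ord_tail al))./2.+2 <= uphalf (al ord0 + entry_sum (ord_tail al)))%N.
    by apply: leq_trans (uphalf_leq (leq_add head_gt2 (leqnn _))); rewrite add3n.
  have := bigO_below_leq _ order (bigO_below_mul tail_bound (norm_sum_exprc ^~ (al ord0))).
  by move/(bigO_below_eq 0%N); apply=> n _; rewrite head_error_large.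
- rewrite head2 add2n; apply: (bigO_below_eq n0 (bigO_below_mulS v tail_error)) => n n0n.
  by rewrite head_error_head2.
Qed.

Theorem distinct_moment_asymptotics j (al : 'I_j -> nat) : (forall k, 0 < al k)%N ->
  bigO_below (uphalf (entry_sum al)) (moment_error al).
Proof.
elim: j al => [|j IHj] al al_gt0.
  by apply: (bigO_below_eq 0%N (bigO_below0 _)) => n _; rewrite moment_error0.
have tail_gt0 k : (0 < ord_tail al k)%N by apply: al_gt0.
have incr_error k :
    bigO_below (uphalf (entry_sum al)) (moment_error (incr_at (ord_tail al) k (al ord0))).
  rewrite entry_sum_recl addnC -(entry_sum_incr_at _ _ k); apply: IHj => k'.
  by rewrite /incr_at ltn_addr.
have head := bigO_below_head_error _ _ al_gt0 (IHj _ tail_gt0).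
apply: (bigO_below_eq 0%N (bigO_belowD head (bigO_belowN (bigO_below_sum _ incr_error)))).
by move=> n _; rewrite moment_errorS.
Qed.

End DistinctMoments.

Lemma S_distinct_moment m j (alpha : 'I_j -> nat) n :
  S m j alpha n = (n%:R ^+ m)^-1 * distinct_moment cos_root n alpha.
Proof. by []. Qed.

Lemma S_near_leading_const {m j : nat} {alpha : 'I_j -> nat} : admissible m j alpha ->
  exists K N, forall n, (N <= n)%N ->
    `|S m j alpha n - leading_const 2^-1 alpha| <= K / n%:R.
Proof.
move=> [alpha_bound alpha_sum].
have alpha_gt0 k : (0 < alpha k)%N by case/andP: (alpha_bound k).
have [K [N bound]] := distinct_moment_asymptotics _ _ 3 norm_cos_root_le1
  (fun n n_gt2 => sum_cos_root n (ltnW n_gt2)) sum_cos_root_sqr _ _ alpha_gt0.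
exists K, (maxn N 1) => n; rewrite geq_max => /andP[Nn n_gt0].
have n_pos : 0 < (n%:R : R) by rewrite ltr0n.
have nm_pos : 0 < (n%:R : R) ^+ m by rewrite exprn_gt0.
have := bound n Nn; rewrite /moment_error /entry_sum alpha_sum mul2n uphalf_double doubleK.
set T := distinct_moment _ _ _ => bound_n.
have -> : S m j alpha n - leading_const 2^-1 alpha
          = (T - leading_const 2^-1 alpha * n%:R ^+ m) / n%:R ^+ m.
  by rewrite S_distinct_moment -/T mulrBl -mulrA divff ?mulr1 ?gt_eqF // mulrC.
rewrite normrM normfV (gtr0_norm nm_pos) ler_pdivrMr // mulrAC ler_pdivlMr //.
by rewrite mulrC.
Qed.

Lemma count_entries_card (P : pred nat) j (al : 'I_j -> nat) :
  count_entries P al = #|[pred k | P (al k)]|.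
Proof.
rewrite /count_entries -sum1_card [RHS]big_mkcond /=; apply: eq_bigr => k _.
by rewrite inE; case: (P (al k)).
Qed.

Lemma count_entries12 {j : nat} {al : 'I_j -> nat} :
  (forall k, (al k == 1%N) || (al k == 2%N)) ->
  entry_sum al = (count_entries (pred1 1%N) al + 2 * count_entries (pred1 2%N) al)%N
  /\ j = (count_entries (pred1 1%N) al + count_entries (pred1 2%N) al)%N.
Proof.
move=> al12; split.
  rewrite /entry_sum /count_entries big_distrr -big_split; apply: eq_bigr => k _ /=.
  by case/orP: (al12 k) => /eqP ->.
rewrite -[j in LHS]card_ord -sum1_card /count_entries -big_split; apply: eq_bigr => k _ /=.
by case/orP: (al12 k) => /eqP ->.
Qed.

Lemma inA_no_large_entry {m j : nat} {al : 'I_j -> nat} : admissible m j al ->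
  inA m j al = (count_entries (fun x => 2 < x)%N al == 0%N).
Proof.
move=> [al_bound al_sum].
have no_largeE : (count_entries (fun x => 2 < x)%N al == 0%N)
                 = [forall k, (al k == 1%N) || (al k == 2%N)].
  apply/eqP/forallP => [large0 k | al12].
    have [al_k_gt2 | ] := ltnP 2 (al k); last by have := al_bound k; lia.
    by have := @count_entries_gt0 (fun x => 2 < x)%N _ _ _ al_k_gt2; rewrite large0.
  by rewrite /count_entries big1 // => k _; case/orP: (al12 k) => /eqP ->.
rewrite /inA -no_largeE; case: eqP => //= /eqP; rewrite no_largeE => /forallP al12.
have [sumE cardE] := count_entries12 al12.
have -> : #|[pred k | al k == 2%N]| = count_entries (pred1 2%N) al by rewrite count_entries_card.
by apply/eqP; move: al_sum; rewrite -/(entry_sum al) sumE; lia.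
Qed.

Lemma AconstE m j :
  Aconst m j = (-1) ^+ (j - m) * ((j - m).*2)`!%:R / (2 ^+ j * (j - m)`!%:R).
Proof. by rewrite /Aconst natrM natrX mul2n. Qed.

Lemma Aconst_neq0 m j : Aconst m j != 0.
Proof.
have fact_neq0 k : (k`!%:R : R) != 0 by rewrite pnatr_eq0 -lt0n fact_gt0.
rewrite AconstE !mulf_neq0 ?invr_eq0 ?mulf_neq0 ?fact_neq0 ?expf_neq0 ?oppr_eq0 ?oner_eq0 //.
by rewrite pnatr_eq0.
Qed.

Lemma leading_const_inA {m j : nat} {al : 'I_j -> nat} :
  admissible m j al -> inA m j al -> leading_const 2^-1 al = Aconst m j.
Proof.
move=> adm inA_al; have no_large := inA_al; rewrite (inA_no_large_entry adm) in no_large.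
case/andP: inA_al => /forallP al12 _; have [sumE cardE] := count_entries12 al12.
have ones_double : count_entries (pred1 1%N) al = (j - m).*2.
  by move: adm.2; rewrite -/(entry_sum al) sumE; lia.
have sum_double : entry_sum al = m.*2 by rewrite -mul2n; exact: adm.2.
rewrite /leading_const no_large ones_double sum_double doubleK signed_pairings_double AconstE.
have fact_neq0 k : (k`!%:R : R) != 0 by rewrite pnatr_eq0 -lt0n fact_gt0.
rewrite -(subnK (_ : m <= j)%N); last by move: adm.2; rewrite -/(entry_sum al) sumE; lia.
rewrite addnK exprD exprVn.
by field; rewrite fact_neq0 !expf_neq0 // pnatr_eq0.
Qed.

Lemma leading_const_notinA {m j : nat} {al : 'I_j -> nat} :
  admissible m j al -> ~~ inA m j al -> leading_const 2^-1 al = 0.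
Proof. by move=> adm; rewrite /leading_const (inA_no_large_entry adm) => /negbTE ->. Qed.

Theorem lemma3 (m j : nat) (hmj : (m <= j <= 2 * m)%N)
  (alpha : 'I_j -> nat) (hadm : admissible m j alpha) :
  (inA m j alpha ->
     exists (C : R) (N : nat), forall n : nat, (N <= n)%N ->
       exists e : R, `|e| <= C / n%:R /\ S m j alpha n = Aconst m j * (1 + e))
  /\
  (~~ inA m j alpha ->
     exists (C : R) (N : nat), forall n : nat, (N <= n)%N ->
       `|S m j alpha n| <= C / n%:R).
Proof.
have [K [N near_leading]] := S_near_leading_const hadm.
split => [inA_alpha | notinA_alpha].
  have A_neq0 := Aconst_neq0 m j.
  exists (K / `|Aconst m j|), N => n Nn.
  exists ((S m j alpha n - Aconst m j) / Aconst m j); split; last by field.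
  rewrite normrM normfV mulrAC ler_pM2r ?invr_gt0 ?normr_gt0 //.
  by rewrite -(leading_const_inA hadm inA_alpha) near_leading.
exists K, N => n Nn.
by have := near_leading n Nn; rewrite (leading_const_notinA hadm notinA_alpha) subr0.
Qed.
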